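(* Let $\beta\in(0,\infty)$ and, for each $N\ge1$, let $K=K_N$ be a positive integer with $K_N/N\to\beta$. Let $\boldsymbol{S}\in\mathbb{R}^{N\times K}$ be a random time-hopping matrix with $N_{\mathsf s}=1$: its columns are independent, $\boldsymbol{s}_k=\epsilon_k\boldsymbol{e}_{\pi_k}$ with $\pi_k$ uniform on $\{1,\dots,N\}$ and $\epsilon_k$ uniform on $\{-1,+1\}$, all independent. Then, as $N\to\infty$, \[ r_N:=\frac{1}{N}\operatorname{rank}\boldsymbol{S}\ \xrightarrow{p}\ 1-e^{-\beta}. \]
   Context: $\boldsymbol{e}_i$ denotes the $i$th standard basis vector of $\mathbb{R}^N$; $\xrightarrow{p}$ denotes convergence in probability. *)

From HB Require Import structures.
From mathcomp Require Import all_boot all_order all_algebra.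
From mathcomp Require Import all_classical all_reals all_analysis.
Set Implicit Arguments. Unset Strict Implicit. Unset Printing Implicit Defensive.
Import Order.TTheory GRing.Theory Num.Theory.
Local Open Scope ring_scope.

(* A sample point for the time-hopping matrix with N_s = 1: for every column
   k < K a pair (pi_k, eps_k) with pi_k in {0..N-1} (= {1..N} shifted) and
   eps_k a sign (true = +1, false = -1). *)
Notation outcome N K := {ffun 'I_K -> 'I_N * bool}.

Definition th_matrix (R : fieldType) (N K : nat) (w : outcome N K) : 'M[R]_(N, K) :=
  \matrix_(i < N, k < K) (if (w k).1 == i then (if (w k).2 then 1 else -1) else 0).

Definition rank_ratio (R : fieldType) (N K : nat) (w : outcome N K) : R :=
  (\rank (th_matrix R w))%:R / N%:R.

(* Uniform probability on a finite sample space.  All pi_k, eps_k independent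
   and uniform  <=>  (pi, eps) uniform on outcome N K. *)
Definition unif_prob (R : numFieldType) (T : finType) (A : {pred T}) : R :=
  #|A|%:R / #|T|%:R.

(* Every column of S is a signed standard basis vector, so rank S is the number
   of rows hit by some pi_k, i.e. N minus the number Y of empty rows.  Counting
   the outcomes whose columns avoid one, resp. two, given rows gives
   E[Y] = N (1 - 1/N)^K and E[Y^2] <= E[Y] + N^2 (1 - 2/N)^K, hence Var Y <= N.
   Chebyshev then bounds P(|r_N - (1 - (1 - 1/N)^K)| > eps/2) by 4/(eps^2 N),
   and (1 - 1/N)^K -> e^(-beta) is squeezed between exponentials. *)

From HB Require Import structures.
From mathcomp Require Import all_boot all_order all_algebra.
From mathcomp Require Import all_classical all_reals all_analysis.
From mathcomp Require Import zify ring lra.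
Import Order.TTheory GRing.Theory Num.Theory.
Import numFieldTopology.Exports numFieldNormedType.Exports.
Set Implicit Arguments. Unset Strict Implicit.

Definition occupied N K (w : outcome N K) : {set 'I_N} := [set (w k).1 | k in 'I_K].

Lemma mem_occupied N K (w : outcome N K) k : (w k).1 \in occupied w.
Proof. by apply/imsetP; exists k. Qed.

Section RankOfRowSupport.
Local Open Scope ring_scope.
Variables (R : fieldType) (N K : nat).

Lemma sum_delta_mulr (n : nat) (a : 'I_n) (f : 'I_n -> R) :
  \sum_i (i == a)%:R * f i = f a.
Proof.
rewrite (bigD1 a) //= eqxx mul1r big1 ?addr0 // => i /negbTE ->.
by rewrite mul0r.
Qed.

Definition row_select (A : {set 'I_N}) : 'M[R]_(#|A|, N) :=
  \matrix_(j, i) (i == enum_val j)%:R.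

Lemma row_selectM (A : {set 'I_N}) (M : 'M[R]_(N, K)) j k :
  (row_select A *m M) j k = M (enum_val j) k.
Proof.
rewrite !mxE (eq_bigr (fun i => (i == enum_val j)%:R * M i k)) ?sum_delta_mulr //.
by move=> i _; rewrite mxE.
Qed.

Lemma row_selectTK (A : {set 'I_N}) (M : 'M[R]_(N, K)) :
  (forall i k, i \notin A -> M i k = 0) ->
  (row_select A)^T *m (row_select A *m M) = M.
Proof.
move=> M0; apply/matrixP => i k; rewrite mxE.
have [iA | iNA] := boolP (i \in A); last first.
  rewrite M0 // big1 // => j _; rewrite !mxE.
  case: eqP => [ij | _]; last by rewrite mul0r.
  by rewrite ij enum_valP in iNA.
rewrite (eq_bigr (fun j => (j == enum_rank_in iA i)%:R * (row_select A *m M) j k)).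
  by rewrite sum_delta_mulr row_selectM enum_rankK_in.
move=> j _; rewrite !mxE; congr ((_ : bool)%:R * _).
apply/eqP/eqP => [ij | ->]; last by rewrite enum_rankK_in.
by apply: enum_val_inj; rewrite enum_rankK_in.
Qed.

Lemma rank_row_support (A : {set 'I_N}) (M : 'M[R]_(N, K)) (G : 'M[R]_(K, #|A|)) :
  (forall i k, i \notin A -> M i k = 0) -> row_select A *m M *m G = 1%:M ->
  \rank M = #|A|.
Proof.
move=> M0 MG; apply/eqP; rewrite eqn_leq; apply/andP; split.
  rewrite -(row_selectTK M0); apply: leq_trans (mxrankM_maxr _ _) _.
  exact: rank_leq_row.
rewrite -{1}(mxrank1 R #|A|) -MG; apply: leq_trans (mxrankM_maxl _ _) _.
exact: mxrankM_maxr.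
Qed.

Lemma rank_th_matrix (w : outcome N K) : \rank (th_matrix R w) = #|occupied w|.
Proof.
pose sg k : R := if (w k).2 then 1 else -1.
have sgK k : sg k * sg k = 1 by rewrite /sg; case: (w k).2; rewrite ?mulrNN mulr1.
have hit (j : 'I_#|occupied w|) : exists k, (w k).1 == enum_val j.
  by have /imsetP[k _ ->] := enum_valP j; exists k.
pose col j := xchoose (hit j).
have colP j : (w (col j)).1 = enum_val j by exact/eqP/(xchooseP (hit j)).
pose G : 'M[R]_(K, #|occupied w|) := \matrix_(k, j) ((k == col j)%:R * sg k).
apply: (@rank_row_support _ _ G).
  move=> i k iNocc; rewrite mxE; case: eqP => // wi.
  by rewrite -wi mem_occupied in iNocc.
apply/matrixP => j j'; rewrite !mxE.
set S := row_select (occupied w) *m th_matrix R w.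
rewrite (eq_bigr (fun k => (k == col j')%:R * (S j k * sg k))).
  rewrite sum_delta_mulr row_selectM mxE colP -/(sg _).
  rewrite (inj_eq enum_val_inj) eq_sym.
  by case: (j == j'); rewrite ?sgK ?mul0r.
by move=> k _; rewrite [G _ _]mxE mulrCA.
Qed.

End RankOfRowSupport.

Section EmptyRowMoments.
Variables N K : nat.

Lemma card_outcome : #|{: outcome N K}| = (N * 2) ^ K.
Proof. by rewrite card_ffun card_prod !card_ord card_bool. Qed.

Lemma card_outcome_rows_in (S : {set 'I_N}) :
  #|[set w : outcome N K | [forall k, (w k).1 \in S]]| = (#|S| * 2) ^ K.
Proof.
have -> : [set w : outcome N K | [forall k, (w k).1 \in S]] =
          [set w in ffun_on [predX (mem S) & predT]].
  apply/setP => w; rewrite !inE; apply/forallP/ffun_onP => H k; have := H k;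
  by rewrite !inE ?andbT.
by rewrite cardsE card_ffun_on cardX card_ord card_bool.
Qed.

Lemma subset_empty_rows (B : {set 'I_N}) (w : outcome N K) :
  (B \subset ~: occupied w) = [forall k, (w k).1 \in ~: B].
Proof.
apply/fintype.subsetP/forallP => [H k | H i iB]; rewrite inE.
  by apply/negP => /H; rewrite inE mem_occupied.
apply/imsetP => -[k _ ik]; have := H k.
by rewrite inE -ik iB.
Qed.

Lemma sum_card_empty_rows :
  \sum_(w : outcome N K) #|~: occupied w| = N * (N.-1 * 2) ^ K.
Proof.
under eq_bigr => w _ do rewrite -sum1_card big_mkcond /=.
rewrite exchange_big /= -[X in X * _](card_ord N) -sum_nat_const.
apply: eq_bigr => i _; rewrite -big_mkcond sum1_card /=.
rewrite -[N.-1](congr1 predn (card_ord N)) -(cardsC1 i) -card_outcome_rows_in.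
by apply: eq_card => w; rewrite !inE -subset_empty_rows finset.sub1set.
Qed.

Lemma sum_card_empty_rows_sqr :
  \sum_(w : outcome N K) #|~: occupied w| ^ 2 <=
  N * (N.-1 * 2) ^ K + N * (N * ((N - 2) * 2) ^ K).
Proof.
under eq_bigr => w _ do rewrite expnS expn1 -cardsX -sum1_card big_mkcond /=.
rewrite exchange_big /=.
rewrite (eq_bigr (fun p => (#|~: [set p.1; p.2]| * 2) ^ K)); last first.
  move=> [i j] _; rewrite -big_mkcond sum1_card /= -card_outcome_rows_in.
  apply: eq_card => w; rewrite [in RHS]inE -subset_empty_rows finset.subUset !finset.sub1set.
  by rewrite -[LHS]/((i, j) \in finset.setX (~: occupied w) (~: occupied w)) finset.in_setX.
rewrite -(pair_bigA _ (fun i j => (#|~: [set i; j]| * 2) ^ K)) /=.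
rewrite -mulnDr -[X in X * _](card_ord N) -sum_nat_const.
apply: leq_sum => i _.
rewrite (bigD1 i) //= finset.setUid -[N.-1](congr1 predn (card_ord N)) -(cardsC1 i).
rewrite leq_add2l (eq_bigr (fun _ => ((N - 2) * 2) ^ K)); last first.
  move=> j ji; congr ((_ * 2) ^ K); have := cardsC [set i; j].
  by rewrite cards2 card_ord eq_sym ji /=; lia.
by rewrite sum_nat_const leq_mul2r cardC1 card_ord; apply/orP; right; lia.
Qed.

End EmptyRowMoments.

Local Open Scope ring_scope.

Lemma card_gt_mulr_sqr (R : realFieldType) (T : finType) (f : T -> R) (d : R) :
  0 <= d -> #|[pred x | d < `|f x|]|%:R * d ^+ 2 <= \sum_x f x ^+ 2.
Proof.
move=> d0; rewrite mulr_natl -sumr_const big_mkcond /=.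
apply: ler_sum => x _; case: ifP => [|_]; last exact: sqr_ge0.
rewrite inE => /ltW dfx.
by rewrite -(real_normK (num_real (f x))) lerXn2r ?nnegrE.
Qed.

Section Concentration.
Variables (R : realType) (N K : nat).
Hypotheses (N_gt0 : (0 < N)%N) (K_gt0 : (0 < K)%N).

Let n : R := N%:R.
Let T : R := ((N * 2) ^ K)%:R.
Let q : R := (1 - n^-1) ^+ K.
Let Y (w : outcome N K) : R := #|~: occupied w|%:R.

Let n_gt0 : 0 < n. Proof. by rewrite ltr0n. Qed.
Let T_gt0 : 0 < T. Proof. by rewrite ltr0n expn_gt0 muln_gt0 N_gt0. Qed.

Lemma mean_empty_rows : ((N.-1 * 2) ^ K)%:R / T = q.
Proof.
rewrite /T /q /n; case: N N_gt0 => // M _ /=.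
rewrite !natrX -expr_div_n !natrM -[M.+1]addn1 natrD; congr (_ ^+ _).
by field; rewrite -[1]/(1%:R) -natrD addn1 pnatr_eq0.
Qed.

Lemma sum_sqr_dev_empty_rows : \sum_w (Y w - n * q) ^+ 2 <= n * T.
Proof.
set a : R := ((N.-1 * 2) ^ K)%:R; set b : R := (((N - 2) * 2) ^ K)%:R.
have sY : \sum_w Y w = n * a by rewrite -natr_sum sum_card_empty_rows natrM.
have sY2 : \sum_w Y w ^+ 2 <= n * a + n * (n * b).
  rewrite -(eq_bigr _ (fun w _ => natrX _ _ _)) -natr_sum -!natrM -natrD ler_nat.
  exact: sum_card_empty_rows_sqr.
have bT : b * T <= a ^+ 2.
  rewrite -!natrM -natrX ler_nat -expnMn -expnAC leq_exp2r //; nia.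
have aT : a <= T by rewrite ler_nat leq_exp2r //; nia.
have -> : \sum_w (Y w - n * q) ^+ 2 =
          \sum_w Y w ^+ 2 - 2 * (n * q) * \sum_w Y w + (n * q) ^+ 2 * T.
  rewrite (eq_bigr (fun w => Y w ^+ 2 - 2 * (n * q) * Y w + (n * q) ^+ 2)).
    by rewrite big_split sumrB /= -mulr_sumr sumr_const card_outcome mulr_natr.
  by move=> w _; ring.
have nq : n * q = n * a / T by rewrite -mean_empty_rows mulrA.
(* the cross terms collapse to -(E Y)^2 and the two-row term is <= (E Y)^2 *)
have e1 : (n * q) ^+ 2 * T - 2 * (n * q) * (n * a) = - (n * a) ^+ 2 / T.
  by rewrite nq; field; rewrite gt_eqF.
have h1 : n * (n * b) <= (n * a) ^+ 2 / T.
  rewrite ler_pdivlMr //; have := ler_wpM2l (sqr_ge0 n) bT; nra.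
have h2 : n * a <= n * T by rewrite ler_wpM2l ?ler0n.
rewrite sY; lra.
Qed.

Lemma unif_prob_rank_ratio_far (E eps : R) : 0 < eps -> `|q - E| <= eps / 2 ->
  unif_prob R [pred w : outcome N K | eps < `|rank_ratio R w - (1 - E)|]
    <= 4 / eps ^+ 2 * n^-1.
Proof.
move=> eps_gt0 qE.
set d := n * (eps / 2).
have d_gt0 : 0 < d by rewrite mulr_gt0 // divr_gt0.
have far_dev : [pred w : outcome N K | eps < `|rank_ratio R w - (1 - E)|]
               \subset [pred w | d < `|Y w - n * q|].
  apply/fintype.subsetP => w; rewrite !inE /rank_ratio rank_th_matrix.
  have -> : (#|occupied w|%:R : R) = n - Y w.
    have := cardsC (occupied w); rewrite card_ord => cardN.
    by apply/eqP; rewrite eq_sym subr_eq -natrD cardN.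
  have -> : (n - Y w) / n - (1 - E) = E - Y w / n by field; rewrite gt_eqF.
  have -> : Y w - n * q = n * (Y w / n - q) by field; rewrite gt_eqF.
  rewrite normrM gtr0_norm // ltr_pM2l // => far.
  have := ler_distD q E (Y w / n); rewrite distrC in qE.
  by rewrite [`|Y w / n - q|]distrC; lra.
have chebyshev : #|[pred w | d < `|Y w - n * q|]|%:R * d ^+ 2 <= n * T.
  exact: le_trans (card_gt_mulr_sqr _ (ltW d_gt0)) sum_sqr_dev_empty_rows.
have far_le : #|[pred w : outcome N K | eps < `|rank_ratio R w - (1 - E)|]|%:R
              <= #|[pred w | d < `|Y w - n * q|]|%:R :> R.
  by rewrite ler_nat subset_leq_card.
rewrite /unif_prob card_outcome -/T ler_pdivrMr //.
have -> : 4 / eps ^+ 2 * n^-1 * T = n * T / d ^+ 2 by rewrite /d; field; rewrite !gt_eqF.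
rewrite ler_pdivlMr ?exprn_gt0 //.
exact: le_trans (ler_wpM2r (sqr_ge0 d) far_le) chebyshev.
Qed.

End Concentration.

Lemma one_sub_expr_bounds (R : realType) (y : R) (k : nat) : 0 <= y < 1 ->
  expR (- (k%:R * y / (1 - y))) <= (1 - y) ^+ k <= expR (- (k%:R * y)).
Proof.
move=> /andP[y0 y1]; have y1' : 0 < 1 - y by rewrite subr_gt0.
apply/andP; split.
- have -> : - (k%:R * y / (1 - y)) = k%:R * - (y / (1 - y)) by ring.
  rewrite expRM_natl lerXn2r ?nnegrE ?expR_ge0 ?(ltW y1') //.
  rewrite expRN -[X in _ <= X]invrK lef_pV2 ?posrE ?expR_gt0 ?invr_gt0 //.
  have inv_1y : (1 - y)^-1 = 1 + y / (1 - y) by field; rewrite gt_eqF.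
  by rewrite [X in X <= _]inv_1y expR_ge1Dx.
- rewrite -mulrN expRM_natl lerXn2r ?nnegrE ?expR_ge0 ?(ltW y1') //.
  by rewrite addrC -[- y + 1]addrC expR_ge1Dx.
Qed.

Local Open Scope classical_set_scope.

Lemma cvg_invn (R : realType) : (N%:R^-1 : R) @[N --> \oo] --> 0.
Proof.
rewrite gtr0_cvgV0; first exact: cvgr_idn.
by near=> N; rewrite ltr0n; near: N; exists 1%N.
Unshelve. all: end_near.
Qed.

Lemma cvg_one_sub_invn_expr (R : realType) (beta : R) (K : nat -> nat) :
  ((K N)%:R / N%:R : R) @[N --> \oo] --> beta ->
  (1 - N%:R^-1) ^+ K N @[N --> \oo] --> expR (- beta).
Proof.
move=> KN_beta.
have expR_cvg (u : nat -> R) : u @ \oo --> beta -> expR (- u n) @[n --> \oo] --> expR (- beta).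
  by move=> u_beta; apply: continuous_cvg (@continuous_expR R _) (cvgN u_beta).
apply: (squeeze_cvgr _ (expR_cvg _ _) (expR_cvg _ KN_beta)).
  near=> N; have N_gt1 : (1 < N)%N by near: N; exists 2%N.
  by apply: one_sub_expr_bounds; rewrite invr_ge0 ler0n /= invf_lt1 ?ltr0n ?ltr1n // ltnW.
have one_sub_invn : (1 - N%:R^-1 : R) @[N --> \oo] --> (1 : R).
  by rewrite -[X in _ --> X]subr0; apply: cvgB; [exact: cvg_cst | exact: cvg_invn].
rewrite (_ : beta = beta * 1^-1); last by rewrite invr1 mulr1.
exact: cvgM KN_beta (cvgV (oner_neq0 R) one_sub_invn).
Unshelve. all: end_near.
Qed.

Theorem corollary2 (R : realType) (beta : R) (K : nat -> nat) :
  0 < beta ->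
  (forall N, (0 < K N)%N) ->
  ((K N)%:R / N%:R : R) @[N --> \oo] --> beta ->
  forall eps : R, 0 < eps ->
    unif_prob R
       [pred w : outcome N (K N) |
          eps < `| rank_ratio R w - (1 - expR (- beta)) | ] @[N --> \oo] --> (0 : R).
Proof.
move=> _ K_gt0 KN_beta eps eps_gt0.
have /cvgrPdist_le/(_ (eps / 2)) q_near := cvg_one_sub_invn_expr KN_beta.
have bound_cvg : (4 / eps ^+ 2 * N%:R^-1 : R) @[N --> \oo] --> (0 : R).
  by rewrite -(mulr0 (4 / eps ^+ 2)); apply: cvgMl_tmp; exact: cvg_invn.
apply: (squeeze_cvgr _ (cvg_cst (0 : R)) bound_cvg).
near=> N; rewrite divr_ge0 //=.
apply: unif_prob_rank_ratio_far => //; first by near: N; exists 1%N.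
by rewrite distrC; near: N; apply: q_near; lra.
Unshelve. all: end_near.
Qed.
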